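(* For every positive integer $n$, the matrix $L$ indexed by $P(n)$ defined in the context is invertible.
   Context: Let $\phi$ denote Euler's totient function. For a positive integer $n$ let $P(n)=\{(i,j): j\mid n,\ i\mid j\}$. Let $L$ be the square matrix with rows and columns indexed by $P(n)$ whose entry in row $(i,j)$ and column $(d,c)$ is $L_{(i,j)}^{(d,c)} = \phi(d)\,\frac{n}{\operatorname{lcm}(j,c)}$ if $d\mid i$ and $j\mid \operatorname{lcm}(i,c)$, and $0$ otherwise. *)

From HB Require Import structures.
From mathcomp Require Import all_boot all_order all_algebra.
Set Implicit Arguments. Unset Strict Implicit. Unset Printing Implicit Defensive.
Import GRing.Theory.
Local Open Scope ring_scope.

(* P(n) = {(i,j) : j | n, i | j}, as a finite subtype of pairs of naturals <= n
   (for n > 0 every divisor of n is in [1, n]). *)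
Definition Pidx (n : nat) :=
  { p : 'I_n.+1 * 'I_n.+1 | ((p.2 : nat) %| n)%N && ((p.1 : nat) %| p.2)%N }.

Definition Lentry (n i j d c : nat) : nat :=
  if (d %| i)%N && (j %| lcmn i c)%N then (totient d * (n %/ lcmn j c))%N else 0%N.

Definition Lmat (n : nat) : 'M[rat]_#|{: Pidx n}| :=
  \matrix_(a, b)
    let r := val (enum_val a : Pidx n) in
    let s := val (enum_val b : Pidx n) in
    (Lentry n r.1 r.2 s.1 s.2)%:R.

From mathcomp Require Import all_boot all_order all_algebra.
From mathcomp Require Import zify fingroup perm.
Set Implicit Arguments. Unset Strict Implicit. Unset Printing Implicit Defensive.
Import GRing.Theory Num.Theory.
Local Open Scope ring_scope.

(* L is triangular: ordering P(n) lexicographically by i increasing and then by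
   j decreasing, a nonzero entry L_{(i,j)}^{(d,c)} off the diagonal forces d < i,
   or d = i and j < c (as d | c gives lcm(i,c) = c, so j | c).  The diagonal
   entries phi(i) n/j are positive, so det L <> 0. *)

Section KeyTriangular.

Variables (m : nat) (key : 'I_m -> nat).

(* Only the identity permutation contributes: along any other permutation s the
   key never increases and drops somewhere, yet its sum is s-invariant. *)
Lemma det_key_trig (R : idomainType) (M : 'M[R]_m) :
  (forall a b, a != b -> M a b != 0 -> (key b < key a)%N) ->
  \det M = \prod_a M a a.
Proof.
move=> Mtrig; rewrite /determinant (bigD1 (1%g : {perm 'I_m})) //=.
rewrite [X in _ + X]big1 ?addr0.
  by rewrite odd_perm1 expr0 mul1r; apply: eq_bigr => i _; rewrite perm1.
move=> s /eqP s_neq1; apply/eqP; rewrite mulf_eq0; apply/orP; right.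
apply/negPn/negP; rewrite prodf_seq_neq0 => /allP Ms_neq0.
have Ms a : M a (s a) != 0 by apply: Ms_neq0; rewrite mem_index_enum.
have key_s a : (key (s a) <= key a)%N.
  by case: (eqVneq a (s a)) => [<- // | /Mtrig/(_ (Ms a))/ltnW].
have [a sa_neq] : exists a, s a != a.
  apply/existsP; rewrite -negb_forall; apply/negP => /forallP s1; apply: s_neq1.
  by apply/permP => a; rewrite perm1; apply/eqP.
have lt_a : (key (s a) < key a)%N by apply: Mtrig; [rewrite eq_sym | apply: Ms].
have : (\sum_b key (s b) < \sum_b key b)%N.
  rewrite (bigD1 a) //= [X in (_ < X)%N](bigD1 a) //= -addSn.
  by apply: leq_add => //; apply: leq_sum.
by rewrite -(reindex_inj (@perm_inj _ s) (P := xpredT) (F := key)) ltnn.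
Qed.

Lemma key_trig_unitmx (F : fieldType) (M : 'M[F]_m) :
  (forall a b, a != b -> M a b != 0 -> (key b < key a)%N) ->
  (forall a, M a a != 0) -> M \in unitmx.
Proof.
move=> Mtrig Mdiag; rewrite unitmxE unitfE (det_key_trig Mtrig).
by rewrite prodf_seq_neq0; apply/allP => a _; apply: Mdiag.
Qed.

End KeyTriangular.

Definition lex_key (n : nat) (p : nat * nat) : nat := p.1 * n.+1 + (n - p.2).

Lemma lex_key_lt n i j d c : (j <= n)%N -> (c <= n)%N ->
  (d < i)%N || (d == i) && (j < c)%N -> (lex_key n (d, c) < lex_key n (i, j))%N.
Proof.
rewrite /lex_key /= => jn cn /orP[lt_di | /andP[/eqP-> lt_jc]]; last lia.
by have := leq_mul lt_di (leqnn n.+1); rewrite mulSn; lia.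
Qed.

Lemma Lentry_diag n i j : (i %| j)%N ->
  Lentry n i j i j = (totient i * (n %/ j))%N.
Proof.
by move=> ij; rewrite /Lentry dvdnn (lcmn_idPr ij) dvdnn (lcmn_idPr (dvdnn j)).
Qed.

Lemma Lentry_lex n i j d c : (0 < i)%N -> (0 < c)%N -> (d %| c)%N ->
  Lentry n i j d c != 0%N -> (d, c) != (i, j) ->
  (d < i)%N || (d == i) && (j < c)%N.
Proof.
move=> i_gt0 c_gt0 dc; rewrite /Lentry.
case: ifP => [/andP[di j_lcm] _ | _]; last by rewrite eqxx.
case: (eqVneq d i) => [Edi | ne_di _]; last by rewrite ltn_neqAle ne_di dvdn_leq.
rewrite -{}Edi (lcmn_idPr dc) in j_lcm *.
by rewrite ltnn xpair_eqE eqxx /= ltn_neqAle eq_sym => ->; apply: dvdn_leq.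
Qed.

Definition Pidx_pair n (p : Pidx n) : nat * nat := ((val p).1 : nat, (val p).2 : nat).

Lemma Pidx_pair_inj n : injective (@Pidx_pair n).
Proof.
move=> [[i j] Pij] [[d c] Pdc] [/val_inj Edi /val_inj Ecj] /=.
by apply: val_inj; rewrite /= Edi Ecj.
Qed.

Lemma Pidx_pair_spec n (p : Pidx n) : (0 < n)%N ->
  let: (i, j) := Pidx_pair p in [/\ (0 < i)%N, (0 < j)%N, (i %| j)%N & (j <= n)%N].
Proof.
case: p => [[i j] /= /andP[jn ij]] n_gt0.
have j_gt0 : (0 < j)%N := dvdn_gt0 n_gt0 jn.
by split; [apply: dvdn_gt0 ij | | | rewrite -ltnS].
Qed.

Theorem proposition3p3 (n : nat) : (0 < n)%N -> Lmat n \in unitmx.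
Proof.
move=> n_gt0; pose r (a : 'I_#|{: Pidx n}|) := Pidx_pair (enum_val a).
have Lmat_r a b : Lmat n a b = (Lentry n (r a).1 (r a).2 (r b).1 (r b).2)%:R.
  by rewrite mxE.
have r_spec a : let: (i, j) := r a in [/\ (0 < i)%N, (0 < j)%N, (i %| j)%N & (j <= n)%N].
  exact: Pidx_pair_spec.
apply: (@key_trig_unitmx _ (fun a => lex_key n (r a))) => [a b ab | a].
  have r_neq : r b != r a by apply: contra ab => /eqP/Pidx_pair_inj/enum_val_inj ->.
  rewrite Lmat_r pnatr_eq0; move: (r_spec a) (r_spec b) r_neq.
  case: (r a) (r b) => [i j] [d c] [i_gt0 _ _ jn] [_ c_gt0 dc cn] r_neq L_neq0.
  exact: lex_key_lt jn cn (Lentry_lex i_gt0 c_gt0 dc L_neq0 r_neq).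
rewrite Lmat_r; move: (r_spec a); case: (r a) => [i j] [i_gt0 j_gt0 ij jn].
by rewrite Lentry_diag // pnatr_eq0 -lt0n muln_gt0 totient_gt0 i_gt0 divn_gt0.
Qed.
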